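(* Let $(X,G)$ be a symmetric $G$-metric space and let $T:X\to X$. Suppose that $X$ is $T$-orbitally complete, that $T$ is orbitally continuous and injective, and that there exist a real number $q<1$ and a non-negative real-valued function $a:X\times X\times X\to[0,\infty)$ such that for all $x,y,z\in X$ with $x\neq y$, \[ G(Tx,Ty,Tz) < q\cdot \max\Big\{ G(x,y,z),\ a(x,y,z)\,G(Tx,y,z)\,G(x,Ty,z)\,G(x,y,Tz),\ [G(x,y,z)\,G(Tx,Ty,Tz)]^{-1}G(x,Tx,Tx)\,G(y,Ty,Ty)\,G(z,Tz,Tz) \Big\}. \] Then for each $x\in X$ the sequence $(T^nx)$ $G$-converges to some $u_x\in X$ and $Tu_x=u_x$. If in addition $a(x,y,z)\leq [G(x,y,z)G(Tx,Ty,Tz)]^{-1}$ (for all $x,y,z\in X$ with $x\ne y$), then $T$ has a unique fixed point.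
   Context: A $G$-metric space is a nonempty set $X$ with a function $G:X\times X\times X\to[0,\infty)$ such that: (G1) $G(x,y,z)=0$ if $x=y=z$; (G2) $G(x,x,y)>0$ whenever $x\neq y$; (G3) $G(x,x,y)\le G(x,y,z)$ whenever $z\neq y$; (G4) $G$ is symmetric in all three variables; (G5) $G(x,y,z)\le G(x,a,a)+G(a,y,z)$ for all $x,y,z,a\in X$. It is symmetric if $G(x,y,y)=G(x,x,y)$ for all $x,y$. A sequence $(x_n)$ $G$-converges to $x$ if $G(x,x_n,x_m)\to 0$ as $n,m\to\infty$ (equivalently $G(x_n,x,x)\to0$); it is $G$-Cauchy if for every $\varepsilon>0$ there is $N$ with $G(x_n,x_m,x_m)<\varepsilon$ for all $n,m\ge N$. For $a\in X$ let $I(a,T)=\{a,Ta,T^2a,\dots\}$. $T$ is orbitally continuous if whenever $T^{n_i}x\to x^*$ ($G$-convergence) for some $x$ and some increasing sequence $(n_i)$, then $TT^{n_i}x\to Tx^*$. $X$ is $T$-orbitally complete if for every $a\in X$, every $G$-Cauchy sequence contained in $I(a,T)$ $G$-converges in $X$. *)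

From Stdlib Require Import Reals.
Open Scope R_scope.

Definition is_Gmetric {X : Type} (G : X -> X -> X -> R) : Prop :=
  (forall x y z, 0 <= G x y z) /\
  (forall x, G x x x = 0) /\
  (forall x y, x <> y -> 0 < G x x y) /\
  (forall x y z, z <> y -> G x x y <= G x y z) /\
  (forall x y z, G x y z = G x z y /\ G x y z = G y x z /\
                 G x y z = G y z x /\ G x y z = G z x y /\
                 G x y z = G z y x) /\
  (forall x y z a, G x y z <= G x a a + G a y z).

Definition G_symmetric {X : Type} (G : X -> X -> X -> R) : Prop :=
  forall x y, G x y y = G x x y.

Definition Gconv {X : Type} (G : X -> X -> X -> R) (s : nat -> X) (p : X) : Prop :=
  forall eps, 0 < eps -> exists N : nat,
    forall n m, (N <= n)%nat -> (N <= m)%nat -> G p (s n) (s m) < eps.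

Definition GCauchy {X : Type} (G : X -> X -> X -> R) (s : nat -> X) : Prop :=
  forall eps, 0 < eps -> exists N : nat,
    forall n m, (N <= n)%nat -> (N <= m)%nat -> G (s n) (s m) (s m) < eps.

Definition in_orbit {X : Type} (T : X -> X) (a y : X) : Prop :=
  exists k : nat, y = Nat.iter k T a.

Definition orbitally_continuous {X : Type} (G : X -> X -> X -> R) (T : X -> X) : Prop :=
  forall (x xs : X) (ni : nat -> nat),
    (forall i, (ni i < ni (S i))%nat) ->
    Gconv G (fun i => Nat.iter (ni i) T x) xs ->
    Gconv G (fun i => T (Nat.iter (ni i) T x)) (T xs).

Definition orbitally_complete {X : Type} (G : X -> X -> X -> R) (T : X -> X) : Prop :=
  forall (a : X) (s : nat -> X),
    (forall n, in_orbit T a (s n)) -> GCauchy G s -> exists p : X, Gconv G s p.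

(* Write x_n = T^n x and d_n = G(x_n, x_{n+1}, x_{n+1}). The choice (x_n, x_{n+1}, x_{n+1})
   in the contractive condition kills the middle term (it contains G(x_{n+1}, x_{n+1}, x_{n+1}) = 0)
   and turns the last one into d_{n+1}, so d_{n+1} < q max(d_n, d_{n+1}) forces
   d_{n+1} < q d_n. The orbit is therefore G-Cauchy, converges by orbital completeness,
   and orbital continuity makes its limit a fixed point. For two fixed points u <> v
   the choice (u, v, v) gives G(u,v,v) < q G(u,v,v), since the extra bound on a makes
   the middle term at most G(u,v,v) and the last one vanishes. *)

From Stdlib Require Import Reals Lra Lia Classical.
Open Scope R_scope.

Lemma lt_mul_Rmax_r {q a b : R} :
  q < 1 -> 0 < b -> b < q * Rmax a b -> b < q * a.
Proof.
  intros hq hb. apply Rmax_case_strong; intros _ H; [exact H | nra].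
Qed.

Section GMetric.

Context {X : Type} {G : X -> X -> X -> R}.
Hypothesis hG : is_Gmetric G.
Hypothesis hsym : G_symmetric G.

Lemma G_nonneg x y z : 0 <= G x y z.
Proof. exact (proj1 hG x y z). Qed.

Lemma G_diag x : G x x x = 0.
Proof. exact (proj1 (proj2 hG) x). Qed.

Lemma G_rect x y z w : G x y z <= G x w w + G w y z.
Proof. exact (proj2 (proj2 (proj2 (proj2 (proj2 hG)))) x y z w). Qed.

Lemma G_pos {x y} : x <> y -> 0 < G x y y.
Proof. intro hxy. rewrite hsym. exact (proj1 (proj2 (proj2 hG)) x y hxy). Qed.

Lemma G_swap x y : G x y y = G y x x.
Proof.
  destruct (proj1 (proj2 (proj2 (proj2 (proj2 hG)))) x y y) as [_ [_ [_ [_ E]]]].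
  rewrite E, hsym. reflexivity.
Qed.

Lemma Gconv_shift {s : nat -> X} {p} :
  Gconv G s p -> Gconv G (fun n => s (S n)) p.
Proof.
  intros hs eps heps. destruct (hs eps heps) as [N HN].
  exists N. intros n m hn hm. apply HN; lia.
Qed.

Lemma Gconv_unique {s : nat -> X} {p p'} : Gconv G s p -> Gconv G s p' -> p = p'.
Proof.
  intros hp hp'. destruct (classic (p = p')) as [e | ne]; [exact e | exfalso].
  pose proof (G_pos ne) as hg. set (g := G p p' p') in *.
  destruct (hp (g / 2)) as [N1 H1]; [lra |].
  destruct (hp' (g / 2)) as [N2 H2]; [lra |].
  set (n := (N1 + N2)%nat).
  specialize (H1 n n ltac:(lia) ltac:(lia)).
  specialize (H2 n n ltac:(lia) ltac:(lia)).
  pose proof (G_rect p p' p' (s n)) as Hrect.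
  rewrite (G_swap (s n) p') in Hrect. unfold g in *. lra.
Qed.

Section GeometricSteps.

Variables (s : nat -> X) (r : R).
Hypothesis hr0 : 0 <= r.
Hypothesis hr1 : r < 1.
Hypothesis hstep : forall n,
  G (s (S n)) (s (S (S n))) (s (S (S n))) <= r * G (s n) (s (S n)) (s (S n)).

Let d n := G (s n) (s (S n)) (s (S n)).

Lemma step_le_pow n : d n <= r ^ n * d 0%nat.
Proof.
  induction n as [| n IH]; simpl; [lra |].
  pose proof (hstep n). fold (d n) (d (S n)) in *. nra.
Qed.

Lemma tail_bound_nonneg : 0 <= d 0%nat / (1 - r).
Proof. apply Rmult_le_pos; [apply G_nonneg | apply Rlt_le, Rinv_0_lt_compat; lra]. Qed.

(* The geometric series: d_n + d_{n+1} + ... <= r^n d_0 / (1 - r). *)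
Lemma G_tail_le k n :
  G (s n) (s (n + k)) (s (n + k)) <= r ^ n * (d 0%nat / (1 - r)).
Proof.
  pose proof tail_bound_nonneg as hC.
  revert n; induction k as [| k IH]; intro n.
  - rewrite Nat.add_0_r, G_diag. apply Rmult_le_pos; [apply pow_le |]; lra.
  - eapply Rle_trans; [apply (G_rect _ _ _ (s (S n))) |].
    replace (n + S k)%nat with (S n + k)%nat by lia.
    pose proof (IH (S n)). pose proof (step_le_pow n). fold (d n).
    replace (r ^ n * (d 0%nat / (1 - r)))
      with (r ^ n * d 0%nat + r ^ S n * (d 0%nat / (1 - r))) by (simpl; field; lra).
    lra.
Qed.

Lemma GCauchy_of_contracting_steps : GCauchy G s.
Proof.
  intros eps heps.
  pose proof tail_bound_nonneg as hC.
  set (C := d 0%nat / (1 - r)) in hC |- *.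
  destruct (pow_lt_1_zero r ltac:(rewrite Rabs_right; lra) (eps / (C + 1)))
    as [N HN]; [apply Rdiv_lt_0_compat; lra |].
  assert (hsmall : forall n, (N <= n)%nat -> r ^ n * C < eps).
  { intros n hn. specialize (HN n hn).
    assert (hpow : 0 <= r ^ n) by (apply pow_le; lra).
    rewrite Rabs_right in HN by lra.
    apply (Rmult_lt_compat_r (C + 1)) in HN; [| lra].
    unfold Rdiv in HN. rewrite Rmult_assoc, Rinv_l in HN by lra. nra. }
  exists N. intros n m hn hm.
  destruct (Nat.le_ge_cases n m) as [hnm | hmn].
  - replace m with (n + (m - n))%nat by lia.
    eapply Rle_lt_trans; [apply G_tail_le | apply hsmall; lia].
  - rewrite G_swap. replace n with (m + (n - m))%nat by lia.
    eapply Rle_lt_trans; [apply G_tail_le | apply hsmall; lia].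
Qed.

End GeometricSteps.

Lemma orbit_limit_fixed {T : X -> X} {x u : X} :
  orbitally_continuous G T -> Gconv G (fun n => Nat.iter n T x) u -> T u = u.
Proof.
  intros hcont hu.
  apply (Gconv_unique (s := fun n => Nat.iter (S n) T x)).
  - exact (hcont x u (fun i => i) (fun i => Nat.lt_succ_diag_r i) hu).
  - exact (Gconv_shift hu).
Qed.

End GMetric.

Section RationalContraction.

Context {X : Type} {G : X -> X -> X -> R} {T : X -> X} {q : R} {a : X -> X -> X -> R}.
Hypothesis hG : is_Gmetric G.
Hypothesis hsym : G_symmetric G.
Hypothesis hq : q < 1.
Hypothesis hcontr : forall x y z, x <> y ->
  G (T x) (T y) (T z) <
    q * Rmax (G x y z)
          (Rmax (a x y z * G (T x) y z * G x (T y) z * G x y (T z))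
                (/ (G x y z * G (T x) (T y) (T z)) *
                 G x (T x) (T x) * G y (T y) (T y) * G z (T z) (T z))).

Lemma orbit_step_contracts x :
  G (T x) (T (T x)) (T (T x)) <= Rmax 0 q * G x (T x) (T x).
Proof.
  assert (hd0 : 0 <= G x (T x) (T x)) by apply (G_nonneg hG).
  assert (hmul : q * G x (T x) (T x) <= Rmax 0 q * G x (T x) (T x))
    by (apply Rmult_le_compat_r; [lra | apply Rmax_r]).
  destruct (classic (x = T x)) as [e | ne].
  { rewrite <- e, <- e, (G_diag hG). apply Rmult_le_pos; [apply Rmax_l | lra]. }
  pose proof (G_pos hG hsym ne) as hpos0.
  destruct (Rle_lt_or_eq_dec _ _ (G_nonneg hG (T x) (T (T x)) (T (T x))))
    as [hpos1 | hzero1]; [| rewrite <- hzero1; apply Rmult_le_pos; [apply Rmax_l | lra]].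
  specialize (hcontr x (T x) (T x) ne).
  set (d0 := G x (T x) (T x)) in *.
  set (d1 := G (T x) (T (T x)) (T (T x))) in *.
  rewrite (G_diag hG), !Rmult_0_r, !Rmult_0_l in hcontr.
  replace (/ (d0 * d1) * d0 * d1 * d1) with d1 in hcontr by (field; lra).
  rewrite (Rmax_right 0 d1) in hcontr by lra.
  apply Rlt_le, (Rlt_le_trans _ (q * d0)); [| exact hmul].
  exact (lt_mul_Rmax_r hq hpos1 hcontr).
Qed.

Lemma fixed_point_unique {u v} :
  (forall x y z, x <> y -> a x y z <= / (G x y z * G (T x) (T y) (T z))) ->
  T u = u -> T v = v -> u = v.
Proof.
  intros ha hu hv. destruct (classic (u = v)) as [e | ne]; [exact e | exfalso].
  specialize (hcontr u v v ne). specialize (ha u v v ne).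
  rewrite hu, hv in hcontr, ha. rewrite !(G_diag hG), !Rmult_0_r in hcontr.
  pose proof (G_pos hG hsym ne) as hg. set (g := G u v v) in *.
  assert (hmid : a u v v * g * g * g <= g).
  { assert (hgg : 0 < g * g) by nra.
    apply (Rmult_le_compat_r (g * g)) in ha; [| lra].
    rewrite Rinv_l in ha by lra. nra. }
  rewrite (Rmax_left g) in hcontr by (apply Rmax_lub; lra).
  nra.
Qed.

End RationalContraction.

Theorem theorem1 (X : Type) (G : X -> X -> X -> R) (T : X -> X)
  (hX : inhabited X)
  (hG : is_Gmetric G) (hsym : G_symmetric G)
  (hcomp : orbitally_complete G T) (hcont : orbitally_continuous G T)
  (hinj : forall x y, T x = T y -> x = y)
  (q : R) (hq : q < 1) (a : X -> X -> X -> R)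
  (ha : forall x y z, 0 <= a x y z)
  (hcontr : forall x y z, x <> y ->
     G (T x) (T y) (T z) <
       q * Rmax (G x y z)
             (Rmax (a x y z * G (T x) y z * G x (T y) z * G x y (T z))
                   (/ (G x y z * G (T x) (T y) (T z)) *
                    G x (T x) (T x) * G y (T y) (T y) * G z (T z) (T z)))) :
  (forall x, exists u, Gconv G (fun n => Nat.iter n T x) u /\ T u = u) /\
  ((forall x y z, x <> y -> a x y z <= / (G x y z * G (T x) (T y) (T z))) ->
   exists! u, T u = u).
Proof.
  assert (hfix : forall x, exists u, Gconv G (fun n => Nat.iter n T x) u /\ T u = u).
  { intro x.
    assert (hcauchy : GCauchy G (fun n => Nat.iter n T x)).
    { apply (GCauchy_of_contracting_steps hG hsym _ (Rmax 0 q)).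
      - apply Rmax_l.
      - apply Rmax_lub_lt; lra.
      - intro n. exact (orbit_step_contracts hG hsym hq hcontr (Nat.iter n T x)). }
    destruct (hcomp x (fun n => Nat.iter n T x) (fun n => ex_intro _ n eq_refl) hcauchy)
      as [u hu].
    exists u. split; [exact hu | exact (orbit_limit_fixed hG hsym hcont hu)]. }
  split; [exact hfix |].
  intro ha_bound. destruct hX as [x0]. destruct (hfix x0) as [u [_ hu]].
  exists u. split; [exact hu |].
  intros v hv. exact (fixed_point_unique hG hsym hq hcontr ha_bound hu hv).
Qed.
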